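(* Let $(F^kx)_{m\le k\le n}$ be a defocusing orbit segment of the billiard map $F$ on $Q(\phi_*,R)$. Let $m'\le m$ and $n'\ge n$ be such that the base points $p(F^kx)$, $m'\le k\le m$, all lie on one circular boundary arc, and the base points $p(F^kx)$, $n\le k\le n'$, all lie on one circular boundary arc. Then the segment $(F^kx)_{m'\le k\le n'}$ is defocusing (with the same sign).
   Context: $Q(\phi_*,R)$ is the asymmetric lemon table, the intersection of two disks whose boundary consists of two circular arcs $\Gamma_r,\Gamma_R$; phase space points $x$ are inward unit vectors based at $p(x)\in\Gamma_r\cup\Gamma_R$ with coordinates $(\phi,\theta)$ ($\phi$ the angular position on the circle, $\theta\in(0,\pi)$ the angle from the positive tangent direction); $F$ is the billiard map. With $d(x)=\rho\sin\theta$ ($\rho$ the radius of the arc containing $p(x)$) and $\tau(x)=|p(x)p(Fx)|$, the derivative in $(\phi,\theta)$ coordinates is $$D_xF=\frac1{d(Fx)}\begin{bmatrix}\tau(x)-d(x)&\tau(x)\\ \tau(x)-d(x)-d(Fx)&\tau(x)-d(Fx)\end{bmatrix}.$$ A finite orbit segment $(F^kx)_{m\le k\le n}$ is positively (resp. negatively) defocusing if all four entries of the matrix $D_{F^mx}F^{n-m}$ (in $(\phi,\theta)$ coordinates) are positive (resp. negative); defocusing means positively or negatively defocusing. *)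

From Stdlib Require Import Reals Lra Lia ZArith.
Open Scope R_scope.

(** The table is the intersection of the closed disk of centre (c1x,c1y),
    radius rho1 and the closed disk of centre (c2x,c2y), radius rho2, whose
    boundary circles cross.  Its boundary consists of the two circular arcs
    Gamma_1 (on circle 1, inside disk 2) and Gamma_2 (on circle 2, inside
    disk 1).  Every asymmetric lemon table Q(phi_*,R) is of this form. *)
Record Table := mkTable {
  c1x : R; c1y : R; rho1 : R;
  c2x : R; c2y : R; rho2 : R }.

Definition lemon_table (Q : Table) : Prop :=
  0 < rho1 Q /\ 0 < rho2 Q /\
  Rabs (rho1 Q - rho2 Q) < sqrt ((c1x Q - c2x Q) ^ 2 + (c1y Q - c2y Q) ^ 2)
    < rho1 Q + rho2 Q.

(** Phase point: [side] = true means the base point is on Gamma_1, false on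
    Gamma_2; [phi] is the angular position on that circle, [theta] the angle
    from the positive tangent direction (-sin phi, cos phi). *)
Record Phase := mkPhase { side : bool; phi : R; theta : R }.

Definition radius (Q : Table) (s : bool) : R := if s then rho1 Q else rho2 Q.
Definition cenx (Q : Table) (s : bool) : R := if s then c1x Q else c2x Q.
Definition ceny (Q : Table) (s : bool) : R := if s then c1y Q else c2y Q.

Definition px (Q : Table) (x : Phase) : R :=
  cenx Q (side x) + radius Q (side x) * cos (phi x).
Definition py (Q : Table) (x : Phase) : R :=
  ceny Q (side x) + radius Q (side x) * sin (phi x).

(** unit velocity: cos(theta) * tangent + sin(theta) * inward normal,
    tangent = (-sin phi, cos phi), inward normal = (-cos phi, -sin phi). *)
Definition vx (x : Phase) : R :=
  cos (theta x) * (- sin (phi x)) + sin (theta x) * (- cos (phi x)).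
Definition vy (x : Phase) : R :=
  cos (theta x) * cos (phi x) + sin (theta x) * (- sin (phi x)).

(** x is a genuine phase point: inward direction, and base point on the
    open arc (strictly inside the other disk, i.e. not a corner). *)
Definition valid (Q : Table) (x : Phase) : Prop :=
  0 < theta x < PI /\
  (px Q x - cenx Q (negb (side x))) ^ 2 + (py Q x - ceny Q (negb (side x))) ^ 2
    < radius Q (negb (side x)) ^ 2.

(** y = F x (billiard map): p(y) is reached from p(x) by moving along the
    velocity of x, and the velocity of y is the mirror reflection of the
    velocity of x in the tangent line at p(y). (By convexity the first
    boundary point hit is the only one, so this determines F.) *)
Definition step (Q : Table) (x y : Phase) : Prop :=
  valid Q x /\ valid Q y /\
  exists t : R, 0 < t /\
    px Q y = px Q x + t * vx x /\ py Q y = py Q x + t * vy x /\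
    (let nx := cos (phi y) in let ny := sin (phi y) in
     let dot := vx x * nx + vy x * ny in
     vx y = vx x - 2 * dot * nx /\ vy y = vy x - 2 * dot * ny).

Definition is_orbit (Q : Table) (xs : Z -> Phase) (a b : Z) : Prop :=
  (forall k : Z, (a <= k <= b)%Z -> valid Q (xs k)) /\
  (forall k : Z, (a <= k < b)%Z -> step Q (xs k) (xs (k + 1)%Z)).

Definition dd (Q : Table) (x : Phase) : R := radius Q (side x) * sin (theta x).
Definition tau (Q : Table) (x y : Phase) : R :=
  sqrt ((px Q y - px Q x) ^ 2 + (py Q y - py Q x) ^ 2).

Record Mat2 := mkMat2 { a11 : R; a12 : R; a21 : R; a22 : R }.
Definition mmul (A B : Mat2) : Mat2 :=
  mkMat2 (a11 A * a11 B + a12 A * a21 B) (a11 A * a12 B + a12 A * a22 B)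
         (a21 A * a11 B + a22 A * a21 B) (a21 A * a12 B + a22 A * a22 B).
Definition mid : Mat2 := mkMat2 1 0 0 1.

(** D_x F in (phi,theta) coordinates, where y = F x (formula from the paper). *)
Definition DF (Q : Table) (x y : Phase) : Mat2 :=
  let t := tau Q x y in let d0 := dd Q x in let d1 := dd Q y in
  mkMat2 ((t - d0) / d1) (t / d1) ((t - d0 - d1) / d1) ((t - d1) / d1).

(** D_{F^m x} F^j along the orbit xs (chain rule):
    DF(x_{m+j-1}) * ... * DF(x_m). *)
Fixpoint DFiter (Q : Table) (xs : Z -> Phase) (m : Z) (j : nat) : Mat2 :=
  match j with
  | O => mid
  | S j' => mmul (DF Q (xs (m + Z.of_nat j')%Z) (xs (m + Z.of_nat j' + 1)%Z))
                 (DFiter Q xs m j')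
  end.

Definition DFseg (Q : Table) (xs : Z -> Phase) (m n : Z) : Mat2 :=
  DFiter Q xs m (Z.to_nat (n - m)).

Definition pos_defocusing (Q : Table) (xs : Z -> Phase) (m n : Z) : Prop :=
  (m <= n)%Z /\
  let A := DFseg Q xs m n in 0 < a11 A /\ 0 < a12 A /\ 0 < a21 A /\ 0 < a22 A.

Definition neg_defocusing (Q : Table) (xs : Z -> Phase) (m n : Z) : Prop :=
  (m <= n)%Z /\
  let A := DFseg Q xs m n in a11 A < 0 /\ a12 A < 0 /\ a21 A < 0 /\ a22 A < 0.

From Stdlib Require Import Reals ZArith Lra Lia Psatz.
Open Scope R_scope.

(** When two consecutive base points p(x), p(Fx) lie on the same
    circular arc of radius r, the chord p(x)p(Fx) makes equal angles with the
    circle at both ends: tau(x) = 2 r sin theta(x) and theta(Fx) = theta(x),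
    hence d(Fx) = d(x) and tau(x) = 2 d(x).  Plugging this into the formula
    for D_xF gives the shear matrix [[1 2];[0 1]].  So along a stretch of the
    orbit that stays on one arc, the derivative is a shear [[1 s];[0 1]] with
    s >= 0.  By the chain rule, D F^(n'-m') along the extended segment factors
    as (shear) * D F^(n-m) * (shear), and multiplying a matrix with entries of
    one strict sign on either side by such shears preserves that sign pattern. *)

Lemma circle_chord (r a b A B v1 v2 t : R) :
  0 < r -> 0 < t ->
  a * a + b * b = 1 -> A * A + B * B = 1 -> v1 * v1 + v2 * v2 = 1 ->
  r * A = r * a + t * v1 -> r * B = r * b + t * v2 ->
  t = -2 * r * (a * v1 + b * v2) /\ A * v1 + B * v2 = - (a * v1 + b * v2).
Proof.
  intros Hr Ht Hab HAB Hv HA HB.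
  assert (Hlen : t = -2 * r * (a * v1 + b * v2)).
  { assert (Hsq : (r * A) * (r * A) + (r * B) * (r * B) = r * r) by nra.
    rewrite HA, HB in Hsq.
    assert (Hfac : t * (t + 2 * r * (a * v1 + b * v2)) = 0) by nra.
    apply Rmult_integral in Hfac; lra. }
  split; [exact Hlen|].
  apply (Rmult_eq_reg_l r); [|lra].
  replace (r * (A * v1 + B * v2)) with ((r * A) * v1 + (r * B) * v2) by ring.
  rewrite HA, HB, Hlen. nra.
Qed.

Lemma cos_sin_unit (u : R) : cos u * cos u + sin u * sin u = 1.
Proof. pose proof (sin2_cos2 u) as H; unfold Rsqr in H; lra. Qed.

Lemma velocity_unit (x : Phase) : vx x * vx x + vy x * vy x = 1.
Proof.
  unfold vx, vy.
  pose proof (cos_sin_unit (phi x)); pose proof (cos_sin_unit (theta x)); nra.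
Qed.

Lemma velocity_radial (x : Phase) :
  cos (phi x) * vx x + sin (phi x) * vy x = - sin (theta x).
Proof.
  unfold vx, vy.
  replace (cos (phi x) * (cos (theta x) * - sin (phi x) + sin (theta x) * - cos (phi x))
           + sin (phi x) * (cos (theta x) * cos (phi x) + sin (theta x) * - sin (phi x)))
    with (- sin (theta x) * (cos (phi x) * cos (phi x) + sin (phi x) * sin (phi x)))
    by ring.
  rewrite cos_sin_unit; ring.
Qed.

Lemma lemon_radius_pos (Q : Table) (s : bool) : lemon_table Q -> 0 < radius Q s.
Proof. intros [H1 [H2 _]]; destruct s; simpl; assumption. Qed.

(** A billiard step between two points of the same arc: the chord length is
    twice d(x), and the reflection preserves theta, hence d. *)
Lemma same_arc_step (Q : Table) (x y : Phase) :
  0 < radius Q (side x) -> step Q x y -> side y = side x ->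
  tau Q x y = 2 * dd Q x /\ dd Q y = dd Q x.
Proof.
  intros Hr [_ [_ [t [Ht [Ex [Ey [Rx Ry]]]]]]] Hs.
  unfold px, py in Ex, Ey; rewrite Hs in Ex, Ey.
  set (r := radius Q (side x)) in *.
  destruct (circle_chord r (cos (phi x)) (sin (phi x)) (cos (phi y)) (sin (phi y))
              (vx x) (vy x) t Hr Ht (cos_sin_unit _) (cos_sin_unit _)
              (velocity_unit x) ltac:(lra) ltac:(lra)) as [Hlen Hout].
  rewrite velocity_radial in Hlen, Hout.
  assert (Hthy : sin (theta y) = sin (theta x)).
  { pose proof (velocity_radial y) as Hy; rewrite Rx, Ry in Hy.
    set (c := cos (phi y)) in *; set (s := sin (phi y)) in *.
    replace (c * (vx x - 2 * (vx x * c + vy x * s) * c)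
             + s * (vy x - 2 * (vx x * c + vy x * s) * s))
      with ((c * vx x + s * vy x) * (1 - 2 * (c * c + s * s))) in Hy by ring.
    rewrite Hout in Hy; unfold c, s in Hy; rewrite cos_sin_unit in Hy; lra. }
  assert (Htau : tau Q x y = t).
  { unfold tau, px, py; rewrite Hs; fold r; rewrite Ex, Ey.
    replace ((cenx Q (side x) + r * cos (phi x) + t * vx x
              - (cenx Q (side x) + r * cos (phi x))) ^ 2
             + (ceny Q (side x) + r * sin (phi x) + t * vy x
              - (ceny Q (side x) + r * sin (phi x))) ^ 2)
      with (t ^ 2 * (vx x * vx x + vy x * vy x)) by ring.
    rewrite velocity_unit, Rmult_1_r. apply sqrt_pow2; lra. }
  unfold dd; rewrite Hs, Htau, Hthy; fold r; split; lra.
Qed.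

Definition shear (s : R) : Mat2 := mkMat2 1 s 0 1.

Definition pos_shear (M : Mat2) : Prop := exists s, 0 <= s /\ M = shear s.

Lemma shear_mul (s u : R) : mmul (shear s) (shear u) = shear (s + u).
Proof. unfold mmul, shear; simpl; f_equal; ring. Qed.

Lemma same_arc_DF (Q : Table) (x y : Phase) :
  0 < radius Q (side x) -> step Q x y -> side y = side x ->
  DF Q x y = shear 2.
Proof.
  intros Hr Hstep Hs.
  destruct (same_arc_step Q x y Hr Hstep Hs) as [Htau Hd].
  destruct Hstep as [[Htheta _] _].
  assert (Hdx : 0 < dd Q x).
  { unfold dd; apply Rmult_lt_0_compat; [exact Hr | apply sin_gt_0; apply Htheta]. }
  unfold DF, shear; rewrite Htau, Hd; f_equal; field; lra.
Qed.

Lemma shear_sandwich_pos (M : Mat2) (s u : R) :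
  0 <= s -> 0 <= u ->
  0 < a11 M /\ 0 < a12 M /\ 0 < a21 M /\ 0 < a22 M ->
  let N := mmul (shear s) (mmul M (shear u)) in
  0 < a11 N /\ 0 < a12 N /\ 0 < a21 N /\ 0 < a22 N.
Proof.
  destruct M as [m11 m12 m21 m22]; unfold mmul, shear; simpl.
  intros Hs Hu [H11 [H12 [H21 H22]]].
  assert (P1 : 0 <= s * m21) by (apply Rmult_le_pos; lra).
  assert (P2 : 0 <= m11 * u) by (apply Rmult_le_pos; lra).
  assert (P3 : 0 <= m21 * u) by (apply Rmult_le_pos; lra).
  assert (P4 : 0 <= s * (m21 * u + m22)) by (apply Rmult_le_pos; lra).
  repeat split; nra.
Qed.

Lemma shear_sandwich_neg (M : Mat2) (s u : R) :
  0 <= s -> 0 <= u ->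
  a11 M < 0 /\ a12 M < 0 /\ a21 M < 0 /\ a22 M < 0 ->
  let N := mmul (shear s) (mmul M (shear u)) in
  a11 N < 0 /\ a12 N < 0 /\ a21 N < 0 /\ a22 N < 0.
Proof.
  destruct M as [m11 m12 m21 m22]; unfold mmul, shear; simpl.
  intros Hs Hu [H11 [H12 [H21 H22]]].
  assert (P1 : s * m21 <= 0) by nra.
  assert (P2 : m11 * u <= 0) by nra.
  assert (P3 : m21 * u <= 0) by nra.
  assert (P4 : s * (m21 * u + m22) <= 0) by nra.
  repeat split; nra.
Qed.

Lemma mmul_assoc (A B C : Mat2) : mmul A (mmul B C) = mmul (mmul A B) C.
Proof. destruct A, B, C; unfold mmul; simpl; f_equal; ring. Qed.

Lemma mmul_mid_l (A : Mat2) : mmul mid A = A.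
Proof. destruct A; unfold mmul, mid; simpl; f_equal; ring. Qed.

Lemma DFiter_add (Q : Table) (xs : Z -> Phase) (m : Z) (a b : nat) :
  DFiter Q xs m (a + b) = mmul (DFiter Q xs (m + Z.of_nat a) b) (DFiter Q xs m a).
Proof.
  induction b as [|b IH].
  - rewrite Nat.add_0_r; simpl; now rewrite mmul_mid_l.
  - rewrite Nat.add_succ_r; simpl; rewrite IH, mmul_assoc.
    now replace (m + Z.of_nat a + Z.of_nat b)%Z with (m + Z.of_nat (a + b))%Z by lia.
Qed.

Lemma DFseg_split (Q : Table) (xs : Z -> Phase) (m k n : Z) :
  (m <= k <= n)%Z -> DFseg Q xs m n = mmul (DFseg Q xs k n) (DFseg Q xs m k).
Proof.
  intros Hk; unfold DFseg.
  replace (Z.to_nat (n - m)) with (Z.to_nat (k - m) + Z.to_nat (n - k))%nat by lia.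
  rewrite DFiter_add.
  now replace (m + Z.of_nat (Z.to_nat (k - m)))%Z with k by lia.
Qed.

Lemma DFseg_same_arc (Q : Table) (xs : Z -> Phase) (a b : Z) :
  lemon_table Q -> (a <= b)%Z ->
  (forall k : Z, (a <= k < b)%Z -> step Q (xs k) (xs (k + 1)%Z)) ->
  (forall k : Z, (a <= k <= b)%Z -> side (xs k) = side (xs a)) ->
  pos_shear (DFseg Q xs a b).
Proof.
  intros HQ Hab Hstep Hside; unfold DFseg.
  assert (Hiter : forall j : nat, (a + Z.of_nat j <= b)%Z -> pos_shear (DFiter Q xs a j)).
  { induction j as [|j IH]; intros Hj; simpl.
    - exists 0; split; [lra | reflexivity].
    - destruct (IH ltac:(lia)) as [s [Hs ->]].
      rewrite (same_arc_DF Q _ _ (lemon_radius_pos Q _ HQ) (Hstep (a + Z.of_nat j)%Z ltac:(lia))).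
      + exists (2 + s); split; [lra | apply shear_mul].
      + rewrite (Hside (a + Z.of_nat j + 1)%Z ltac:(lia)).
        symmetry; apply Hside; lia. }
  apply Hiter; lia.
Qed.

Theorem mainTheorem5 (Q : Table) (xs : Z -> Phase) (m n m' n' : Z) :
  lemon_table Q ->
  is_orbit Q xs m' n' ->
  (m' <= m)%Z -> (n <= n')%Z ->
  (forall k : Z, (m' <= k <= m)%Z -> side (xs k) = side (xs m)) ->
  (forall k : Z, (n <= k <= n')%Z -> side (xs k) = side (xs n)) ->
  (pos_defocusing Q xs m n -> pos_defocusing Q xs m' n') /\
  (neg_defocusing Q xs m n -> neg_defocusing Q xs m' n').
Proof.
  intros HQ [_ Hstep] Hm Hn Hsm Hsn.
  assert (Hfactor : (m <= n)%Z -> exists s u, 0 <= s /\ 0 <= u /\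
            DFseg Q xs m' n' = mmul (shear s) (mmul (DFseg Q xs m n) (shear u))).
  { intros Hmn.
    destruct (DFseg_same_arc Q xs n n' HQ Hn ltac:(intros; apply Hstep; lia)
                ltac:(intros; apply Hsn; lia)) as [s [Hs Es]].
    assert (Hsm' : forall k, (m' <= k <= m)%Z -> side (xs k) = side (xs m')).
    { intros k Hk; rewrite (Hsm k Hk); symmetry; apply Hsm; lia. }
    destruct (DFseg_same_arc Q xs m' m HQ Hm ltac:(intros; apply Hstep; lia)
                Hsm') as [u [Hu Eu]].
    exists s, u; split; [exact Hs | split; [exact Hu|]].
    rewrite (DFseg_split Q xs m' n n') by lia.
    rewrite (DFseg_split Q xs m' m n) by lia.
    now rewrite <- Es, <- Eu. }
  split; intros [Hmn Hsign]; split; try lia;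
    destruct (Hfactor Hmn) as [s [u [Hs [Hu ->]]]].
  - exact (shear_sandwich_pos _ s u Hs Hu Hsign).
  - exact (shear_sandwich_neg _ s u Hs Hu Hsign).
Qed.
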